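(* Let $h\in\mathcal H$ and $\varphi(\underline{x})=h(x_0,x_1)$ on $X=[0,1]^{\mathbb N_0}$. If $a,b\in\mathrm{m}_h$ and $a\neq b$, then \[h(a,b)-h^*-H_\varphi(a^\infty,b^\infty)>0.\]
   Context: $X=[0,1]^{\mathbb N_0}$ with metric $d_X(\underline{x},\underline{y})=\sum_{i\ge0}|x_i-y_i|/2^{i+1}$ and shift $\sigma(\underline{x})_i=x_{i+1}$. $\alpha_\varphi=\inf_\mu\int\varphi\,d\mu$ over $\sigma$-invariant Borel probability measures (in this setting $\alpha_\varphi=h^*$). $B(\underline{x},\underline{y},n;\varepsilon)=\{\underline{z}: d_X(\underline{x},\underline{z})<\varepsilon,\ d_X(\sigma^n\underline{z},\underline{y})<\varepsilon\}$; Peierls barrier $H_\varphi(\underline{x},\underline{y})=\lim_{\varepsilon\to0}\liminf_{n\to\infty}\inf\{\sum_{i=0}^{n-1}(\varphi(\sigma^i\underline{z})-\alpha_\varphi): \underline{z}\in B(\underline{x},\underline{y},n;\varepsilon)\}$. $h^*=\min_x h(x,x)$, $\mathrm{m}_h=\{a: h(a,a)=h^*\}$, $a^\infty=aaa\ldots$. A finite sequence $(x_k,\dots,x_l)$ is minimal (for $h$) if $\sum_{i=k}^{l-1}h(x_i,x_{i+1})\le\sum_{i=k}^{l-1}h(y_i,y_{i+1})$ for every $(y_k,\dots,y_l)$ in $[0,1]$ with the same endpoints. $\mathcal H$ is the set of Lipschitz $h:[0,1]^2\to\mathbb R$ such that (H3) if $\xi_1<\xi_2$, $\eta_1<\eta_2$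 then $h(\xi_1,\eta_1)+h(\xi_2,\eta_2)<h(\xi_1,\eta_2)+h(\xi_2,\eta_1)$; and (H4) if $(x_{-1},x_0,x_1)\ne(x'_{-1},x_0,x'_1)$ are both minimal then $(x_{-1}-x'_{-1})(x_1-x'_1)<0$. *)

From HB Require Import structures.
From mathcomp Require Import all_boot all_order all_algebra.
From mathcomp Require Import all_classical all_reals all_analysis.
Set Implicit Arguments. Unset Strict Implicit. Unset Printing Implicit Defensive.
Import Order.TTheory GRing.Theory Num.Theory.
Import numFieldNormedType.Exports.
Local Open Scope classical_set_scope.
Local Open Scope ring_scope.

Section Defs.
Variable R : realType.

Definition I01 : set R := `[0, 1]%classic.

Definition inX (x : nat -> R) : Prop := forall i, x i \in `[0, 1].

Definition dX (x y : nat -> R) : R :=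
  limn (series (fun i : nat => `|x i - y i| / 2 ^+ i.+1)).

Definition shift (x : nat -> R) : nat -> R := fun i => x i.+1.

Definition cst_seq (a : R) : nat -> R := fun _ => a.

(* h^* = min_{x in [0,1]} h(x,x) (the minimum is attained; we write inf) *)
Definition hstar (h : R -> R -> R) : R := inf [set h x x | x in I01].

Definition mh (h : R -> R -> R) : set R := [set a | a \in `[0, 1] /\ h a a = hstar h].

Definition phi_of (h : R -> R -> R) (x : nat -> R) : R := h (x 0%N) (x 1%N).

Definition minimal (h : R -> R -> R) (x : nat -> R) (k l : nat) : Prop :=
  (forall i, (k <= i <= l)%N -> x i \in `[0, 1]) /\
  forall y : nat -> R, (forall i, (k <= i <= l)%N -> y i \in `[0, 1]) ->
    y k = x k -> y l = x l ->
    \sum_(k <= i < l) h (x i) (x i.+1) <= \sum_(k <= i < l) h (y i) (y i.+1).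

(* a triple (x_{-1}, x_0, x_1), indexed here by 0,1,2 *)
Definition triple (u v w : R) : nat -> R :=
  fun i => if i == 0%N then u else if i == 1%N then v else w.

Definition minimal3 (h : R -> R -> R) (u v w : R) : Prop :=
  minimal h (triple u v w) 0 2.

Definition classH (h : R -> R -> R) : Prop :=
  (exists L : R, forall x y x' y', x \in `[0, 1] -> y \in `[0, 1] ->
      x' \in `[0, 1] -> y' \in `[0, 1] ->
      `|h x y - h x' y'| <= L * (`|x - x'| + `|y - y'|)) /\
  (forall xi1 xi2 eta1 eta2, xi1 \in `[0, 1] -> xi2 \in `[0, 1] ->
      eta1 \in `[0, 1] -> eta2 \in `[0, 1] -> xi1 < xi2 -> eta1 < eta2 ->
      h xi1 eta1 + h xi2 eta2 < h xi1 eta2 + h xi2 eta1) /\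
  (forall u v w u' w', minimal3 h u v w -> minimal3 h u' v w' ->
      (u, w) <> (u', w') -> (u - u') * (w - w') < 0).

(* alpha_phi; in this setting alpha_phi = h^* *)
Definition alpha (h : R -> R -> R) : R := hstar h.

Definition Bset (x y : nat -> R) (n : nat) (eps : R) : set (nat -> R) :=
  [set z | inX z /\ dX x z < eps /\ dX (iter n shift z) y < eps].

Definition Ssum (h : R -> R -> R) (n : nat) (z : nat -> R) : R :=
  \sum_(0 <= i < n) (phi_of h (iter i shift z) - alpha h).

Definition peierls_eps (h : R -> R -> R) (x y : nat -> R) (eps : R) : \bar R :=
  limn_einf (fun n => ereal_inf [set (Ssum h n z)%:E | z in Bset x y n eps]).

Definition peierls (h : R -> R -> R) (x y : nat -> R) : \bar R :=
  lim (peierls_eps h x y eps @[eps --> 0^'+]).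

End Defs.

(* Since a and b both minimise h on the diagonal and a <> b, some c beats the
   direct step: h(a,c) + h(c,b) < h(a,a) + h(a,b).  Otherwise (a,a,b) would be
   minimal; (a,a,a) is minimal by (H3), and two minimal triples with the same
   x_{-1} and x_0 contradict (H4).  The orbit a...a c b b... then lies in every
   B(a^oo, b^oo, n; eps) for n large, with Birkhoff sum h(a,c) + h(c,b) - 2h^*,
   so H_phi(a^oo, b^oo) is at most that, which is < h(a,b) - h^*. *)

From Pilot Require Import Defs.
From mathcomp Require Import all_boot all_order all_algebra.
From mathcomp Require Import all_classical all_reals all_analysis.
From mathcomp Require Import lra zify.
Set Implicit Arguments. Unset Strict Implicit. Unset Printing Implicit Defensive.
Import Order.TTheory GRing.Theory Num.Theory.
Import numFieldNormedType.Exports.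
Local Open Scope classical_set_scope.
Local Open Scope ring_scope.

Section ShiftSpace.
Variable R : realType.
Implicit Types (x y z : nat -> R) (h : R -> R -> R).

Lemma iter_shiftE n z : iter n (@Defs.shift R) z = fun i => z (i + n)%N.
Proof.
elim: n => [|n IH]; first by apply/funext => i; rewrite addn0.
by rewrite iterS IH; apply/funext => i; rewrite /Defs.shift addSnnS.
Qed.

Lemma phi_of_iter_shift h n z : phi_of h (iter n (@Defs.shift R) z) = h (z n) (z n.+1).
Proof. by rewrite iter_shiftE /phi_of add0n add1n. Qed.

Lemma normr_half_lt1 : `|2^-1 : R| < 1.
Proof. by rewrite gtr0_norm ?invf_lt1 ?ltr1n. Qed.

Lemma half_geometric_tail_le k n :
  \sum_(k <= i < k + n) geometric 2^-1 2^-1 i <= 2^-1 ^+ k :> R.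
Proof.
have inv_one_sub_half : (1 - 2^-1 : R)^-1 = 2.
  by rewrite [X in X - _](splitr 1) div1r addrK invrK.
rewrite -mulr_sumr geometric_partial_tail.
apply: le_trans (ler_wpM2l _ (geometric_le_lim _ _ _ normr_half_lt1)) _.
- by rewrite invr_ge0.
- by rewrite exprn_ge0 ?invr_ge0.
- by rewrite invr_gt0.
by rewrite inv_one_sub_half mulrCA mulVf ?mulr1.
Qed.

Lemma dX_le_prefix k x y : inX x -> inX y ->
  (forall i, (i < k)%N -> x i = y i) -> dX x y <= 2^-1 ^+ k.
Proof.
move=> xX yX xy_k; set t := fun i => `|x i - y i| / 2 ^+ i.+1.
have t_ge0 i : 0 <= t i by rewrite divr_ge0 ?exprn_ge0.
have t_le i : t i <= geometric 2^-1 2^-1 i.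
  rewrite /t /= -exprS exprVn ler_pdivrMr ?exprn_gt0 // mulVf ?expf_neq0 //.
  move: (xX i) (yX i); rewrite !in_itv /= => /andP[? ?] /andP[? ?].
  by rewrite ler_norml; apply/andP; split; lra.
have t_cvg : cvgn (series t).
  apply: (series_le_cvg t_ge0 _ t_le) => [i|].
    by rewrite geometric_ge0 ?invr_ge0.
  exact: is_cvg_geometric_series normr_half_lt1.
apply: limr_le t_cvg _; near=> m.
have km : (k <= m)%N by near: m; exact: nbhs_infty_ge.
rewrite /series /= (big_cat_nat (leq0n k) km) /= big_nat_cond big1 ?add0r; last first.
  by move=> i /andP[/andP[_ ik] _]; rewrite /t xy_k // subrr normr0 mul0r.
rewrite -(subnKC km); apply: le_trans (half_geometric_tail_le k (m - k)).
by apply: ler_sum => i _; exact: t_le.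
Unshelve. all: by end_near. Qed.

Definition bridge (a c b : R) (k : nat) : nat -> R :=
  fun i => if (i <= k)%N then a else if i == k.+1 then c else b.

Lemma bridge_inX (a c b : R) k : a \in `[0, 1] -> c \in `[0, 1] -> b \in `[0, 1] ->
  inX (bridge a c b k).
Proof. by move=> a01 c01 b01 i; rewrite /bridge; case: ifP => // _; case: ifP. Qed.

Lemma Bset_bridge (a c b : R) k n eps : a \in `[0, 1] -> c \in `[0, 1] -> b \in `[0, 1] ->
  2^-1 ^+ k < eps -> (k.+2 <= n)%N ->
  Bset (cst_seq a) (cst_seq b) n eps (bridge a c b k).
Proof.
move=> a01 c01 b01 k_eps kn.
have zX : inX (bridge a c b k) by exact: bridge_inX.
have cst_inX (d : R) : d \in `[0, 1] -> inX (cst_seq d) by move=> d01 i.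
split; first exact: zX.
split; apply: le_lt_trans k_eps; apply: dX_le_prefix.
- exact: cst_inX.
- exact: zX.
- by move=> i ik; rewrite /bridge ltnW.
- by move=> i; rewrite iter_shiftE.
- exact: cst_inX.
by move=> i ik; rewrite iter_shiftE /bridge !ifF //; lia.
Qed.

Lemma Ssum_bridge h a c b k n : h a a = hstar h -> h b b = hstar h ->
  (k.+2 <= n)%N -> Ssum h n (bridge a c b k) = h a c - hstar h + (h c b - hstar h).
Proof.
move=> haa hbb kn; rewrite /Ssum /alpha.
under eq_bigr do rewrite phi_of_iter_shift.
rewrite (big_cat_nat (leq0n k)) ?(leq_trans (leqnSn k) (ltnW kn)) //=.
rewrite big_nat_cond big1 ?add0r => [|i /andP[/andP[_ ik] _]]; last first.
  by rewrite /bridge ltnW // ik haa subrr.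
rewrite (big_cat_nat (leqW (leqnSn k)) kn) /= !big_nat_recl //= big_geq //.
rewrite big_nat_cond big1 ?addr0 => [|i /andP[/andP[ki _] _]]; last first.
  by rewrite /bridge !ifF ?hbb ?subrr //; lia.
by rewrite /bridge leqnn ltnn eqxx !ifF //; lia.
Qed.
End ShiftSpace.

Section Peierls.
Variable R : realType.
Implicit Types (x y z : nat -> R) (h : R -> R -> R).
Local Open Scope ereal_scope.

Lemma peierls_eps_le h x y eps (M : R) :
  (\forall n \near \oo, exists2 z, Bset x y n eps z & (Ssum h n z <= M)%R) ->
  peierls_eps h x y eps <= M%:E.
Proof.
move=> [N _ HN]; rewrite /peierls_eps limn_einf_lim.
apply: lime_le; first exact: is_cvg_einfs.
apply: nearW => n /=.
have [z Bz SzM] := HN (maxn n N) (leq_maxr _ _).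
apply: le_trans (_ : (Ssum h (maxn n N) z)%:E <= _); last by rewrite lee_fin.
apply: le_trans; first by apply: ereal_inf_lbound; exists (maxn n N); first exact: leq_maxl.
by apply: ereal_inf_lbound; exists z.
Qed.

Lemma peierls_eps_nonincreasing h x y : {homo peierls_eps h x y : e1 e2 / (e1 <= e2)%R >-> e2 <= e1}.
Proof.
move=> e1 e2 le12; rewrite /peierls_eps !limn_einf_lim.
apply: lee_lim; [exact: is_cvg_einfs | exact: is_cvg_einfs |].
apply: nearW => n /=.
apply: le_ereal_inf_tmp => _ [k kn <-].
apply: le_trans; first by apply: ereal_inf_lbound; exists k.
apply: ereal_inf_le_tmp => _ [z [zX [z1 z2]] <-]; exists z => //.
by split=> //; split; apply: lt_le_trans le12.
Qed.

Lemma peierls_le h x y (M : R) :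
  (forall eps, (0 < eps)%R ->
     \forall n \near \oo, exists2 z, Bset x y n eps z & (Ssum h n z <= M)%R) ->
  peierls h x y <= M%:E.
Proof.
move=> HM; apply: lime_le.
  apply: nonincreasing_at_right_is_cvge; apply: nearW => e e1 e2 _ _.
  exact: peierls_eps_nonincreasing.
near=> e; apply: peierls_eps_le; apply: HM.
by near: e; exact: nbhs_right_gt.
Unshelve. all: by end_near. Qed.

End Peierls.

Section ClassH.
Variable R : realType.
Implicit Types (h : R -> R -> R) (a b c : R).

Lemma peierls_cst_le h a c b : a \in `[0, 1] -> c \in `[0, 1] -> b \in `[0, 1] ->
  h a a = hstar h -> h b b = hstar h ->
  (peierls h (cst_seq a) (cst_seq b) <= (h a c - hstar h + (h c b - hstar h))%:E)%E.
Proof.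
move=> a01 c01 b01 haa hbb; apply: peierls_le => eps eps_gt0.
near \oo => k.
have k_eps : 2^-1 ^+ k < eps.
  by near: k; exact: (cvgr_lt _ (cvg_expr (normr_half_lt1 R)) _ eps_gt0).
near=> n; have kn : (k.+2 <= n)%N by near: n; exact: nbhs_infty_ge.
exists (bridge a c b k); first exact: Bset_bridge.
by rewrite Ssum_bridge.
Unshelve. all: by end_near. Qed.

Lemma hstar_le_diag h y : classH h -> y \in `[0, 1] -> hstar h <= h y y.
Proof.
move=> [[L hL] _] y01; apply: ge_inf; last by exists y.
exists (h 0 0 - `|L| * 2) => _ [x /= x01 <-].
have zero01 : (0 : R) \in `[0, 1] by rewrite in_itv /= lexx ler01.
have := hL x x 0 0 x01 x01 zero01 zero01; rewrite !subr0.
have : x \in `[0, 1] := x01; rewrite in_itv /= => /andP[x_ge0 x_le1].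
rewrite (ger0_norm x_ge0) ler_norml => /andP[+ _].
have := ler_norm L; have := normr_ge0 L; nra.
Qed.

Lemma cross_gt_diag h x y : classH h -> x \in `[0, 1] -> y \in `[0, 1] -> x != y ->
  h x x + h y y < h x y + h y x.
Proof.
move=> [_ [H3 _]] x01 y01; case: (ltgtP x y) => // [xy|yx] _.
- exact: H3.
- by rewrite addrC [X in _ < X]addrC; exact: H3.
Qed.

Lemma minimal3P h u v w : minimal3 h u v w <->
  [/\ u \in `[0, 1], v \in `[0, 1], w \in `[0, 1] &
      forall c, c \in `[0, 1] -> h u v + h v w <= h u c + h c w].
Proof.
have sum2 (y : nat -> R) :
    \sum_(0 <= i < 2) h (y i) (y i.+1) = h (y 0%N) (y 1%N) + h (y 1%N) (y 2%N).
  by rewrite !big_nat_recr //= big_geq // add0r.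
split=> [[t01 tmin]|[u01 v01 w01 uvw]].
  split; [exact: (t01 0%N) | exact: (t01 1%N) | exact: (t01 2%N) |] => c c01.
  have := tmin (triple u c w); rewrite !sum2; apply=> //.
  by move=> [|[|[|i]]] //= _; [exact: (t01 0%N) | exact: (t01 2%N)].
split=> [[|[|[|i]]] //|y y01 y0 y2].
rewrite !sum2 /= y0 y2; apply: uvw; exact: y01.
Qed.

Lemma minimal3_diag h a : classH h -> mh h a -> minimal3 h a a a.
Proof.
move=> hH [a01 haa]; apply/minimal3P; split=> // c c01.
have [->|ca] := eqVneq c a; first by [].
have := cross_gt_diag hH c01 a01 ca; have := hstar_le_diag hH c01.
rewrite -haa; lra.
Qed.

Lemma mh_shortcut h a b : classH h -> mh h a -> mh h b -> a <> b ->
  exists2 c, c \in `[0, 1] & h a c + h c b < h a a + h a b.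
Proof.
move=> hH ma [b01 _] ab; have [a01 _] := ma; have [_ [_ H4]] := hH.
apply: contrapT => no_shortcut.
have aab : minimal3 h a a b.
  apply/minimal3P; split=> // c c01; rewrite leNgt; apply/negP => shortcut.
  by apply: no_shortcut; exists c.
have ab_aa : (a, b) <> (a, a) by case=> /esym.
by have := H4 a a b a a aab (minimal3_diag hH ma) ab_aa; rewrite subrr mul0r ltxx.
Qed.

End ClassH.

Theorem lemma3p6 (R : realType) (h : R -> R -> R) (a b : R) :
  classH h -> mh h a -> mh h b -> a <> b ->
  (0 < (h a b - hstar h)%:E - peierls h (cst_seq a) (cst_seq b))%E.
Proof.
move=> hH ma mb ab.
have [c c01 shortcut] := mh_shortcut hH ma mb ab.
have [[a01 haa] [b01 hbb]] := (ma, mb).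
have := peierls_cst_le a01 c01 b01 haa hbb.
case: peierls => [p | |] //=.
  by rewrite lee_fin -EFinB lte_fin; lra.
by rewrite addey ?ltry.
Qed.
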